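(* Assume $\mathfrak h=\mathfrak s$, and let $X=\prod_{j\in J}X_j$ be a product of topological spaces. Then the following are equivalent: (1) $X$ is sequentially compact; (2) every $X_j$ is sequentially compact, and the set of $j\in J$ such that $X_j$ contains a sequence which does not converge has cardinality $<\mathfrak s$; (3) every $X_j$ is sequentially compact, and the set of $j\in J$ such that $X_j$ is not ultraconnected has cardinality $<\mathfrak s$.
   Context: No separation axioms are assumed; all topological spaces are nonempty. A space is sequentially compact if every sequence $(x_n)_{n\in\omega}$ has a convergent subsequence. A space is ultraconnected if no two nonempty closed subsets of it are disjoint. The splitting number $\mathfrak s$ is the least cardinality of a family $\mathcal S\subseteq[\omega]^\omega$ such that for every $A\in[\omega]^\omega$ there is $S\in\mathcal S$ with both $A\cap S$ and $A\setminus S$ infinite. The cardinal $\mathfrak h$ is the smallest cardinal such that there exist $\mathfrak h$ sequentially compact spaces whose product is not sequentially compact. *)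

From HB Require Import structures.
From mathcomp Require Import all_boot all_order all_algebra.
From mathcomp Require Import all_classical all_reals all_analysis.
Set Implicit Arguments. Unset Strict Implicit. Unset Printing Implicit Defensive.
Local Open Scope classical_set_scope.
Local Open Scope card_scope.

Definition seq_compact (T : topologicalType) : Prop :=
  forall x : nat -> T, exists phi : nat -> nat,
    (forall n m, (n < m)%N -> (phi n < phi m)%N) /\
    exists l : T, (x \o phi) @ \oo --> l.

Definition ultraconnected (T : topologicalType) : Prop :=
  forall A B : set T, closed A -> closed B -> A !=set0 -> B !=set0 ->
    A `&` B !=set0.

Definition has_nonconv_seq (T : topologicalType) : Prop :=
  exists x : nat -> T, ~ (exists l : T, x @ \oo --> l).

Definition splits (S A : set nat) : Prop :=
  infinite_set (A `&` S) /\ infinite_set (A `\` S).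

Definition splitting_family (F : set (set nat)) : Prop :=
  (forall S, F S -> infinite_set S) /\
  (forall A : set nat, infinite_set A -> exists2 S, F S & splits S A).

(* |A| < s : no splitting family has cardinality <= |A|
   (s is the least cardinality of a splitting family). *)
Definition card_lt_s (T : Type) (A : set T) : Prop :=
  forall F : set (set nat), splitting_family F -> ~ (F #<= A).

(* |A| < h : every product of at most |A| many sequentially compact
   spaces is sequentially compact (h is the least cardinality of a family
   of sequentially compact spaces with non-sequentially-compact product). *)
Definition card_lt_h (T : Type) (A : set T) : Prop :=
  forall (K : Type) (Y : K -> topologicalType),
    [set: K] #<= A ->
    (forall k, inhabited (Y k)) ->
    (forall k, seq_compact (Y k)) ->
    seq_compact (prod_topology Y).

(* h = s, expressed as: for every cardinal kappa (= |A|), kappa < h <-> kappa < s. *)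
Definition h_eq_s : Prop :=
  forall (T : Type) (A : set T), card_lt_h A <-> card_lt_s A.

From HB Require Import structures.
From mathcomp Require Import all_boot all_order all_algebra.
From mathcomp Require Import all_classical all_reals all_analysis.
Local Open Scope classical_set_scope.
Local Open Scope card_scope.
Set Implicit Arguments.
Unset Strict Implicit.

(* In a sequentially compact ultraconnected space every sequence converges:
   points d_n chosen in the closures of x_0, ..., x_n (which meet, by
   ultraconnectedness) have a convergent subsequence whose limit lies in
   every closure of {x_m}, so every neighbourhood of it contains every x_m.
   A sequence alternating between two points lying in disjoint closed
   sets diverges.  Hence, for sequentially compact factors, having
   a non-convergent sequence means not being ultraconnected.
   If the product is sequentially compact and N is the set of
   non-ultraconnected factors, a family (S_j)_(j in N) of subsets of omega
   is coded into one sequence whose j-th coordinate is a_j or b_j according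
   as n is in S_j; no S_j splits the index set of a convergent subsequence,
   so |N| < s.  Conversely, if |N| < s = h, the product over N is
   sequentially compact, and along a subsequence converging there every
   remaining coordinate converges too. *)

Lemma cvg_prodP (T J : Type) (X : J -> topologicalType) (F : set_system T)
    (FF : Filter F) (f : T -> prod_topology X) (l : prod_topology X) :
  f @ F --> l <-> forall j, (fun t => f t j) @ F --> l j.
Proof.
split => [/cvg_sup fl j W /=|fl].
  rewrite nbhsE => -[B [oB Bl] BW]; apply: (filterS BW).
  have := fl j (fun g : prod_topology X => B (g j)); rewrite nbhs_simpl; apply.
  exists (fun g : prod_topology X => B (g j)); split => //; exists B => //.
apply/cvg_sup => j U [V] [[W] oW <-] WfN WU.
apply: (filterS WU); have := fl j W; rewrite nbhs_simpl; apply.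
exact: open_nbhs_nbhs.
Qed.

Lemma prod_proj_continuous (J : Type) (X : J -> topologicalType) (j : J) :
  continuous (fun f : prod_topology X => f j).
Proof.
by move=> f; apply: (@cvg_prodP _ _ X (nbhs f) _ id f).1; exact: cvg_id.
Qed.

Lemma prod_proj_surjective (J : Type) (X : J -> topologicalType) :
  (forall j, inhabited (X j)) ->
  forall j (t : X j), exists f : prod_topology X, f j = t.
Proof.
move=> Xne j t; have pt i : {z : X i | True}.
  by apply: cid; case: (Xne i) => z; exists z.
exists (fun i => if pselect (j = i) is left e then eq_rect j X t i e
                 else sval (pt i)).
by case: pselect => // e; rewrite (Prop_irrelevance e erefl).
Qed.

Lemma seq_compact_continuous_surj (S T : topologicalType) (f : S -> T) :
  continuous f -> (forall t, exists s, f s = t) ->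
  seq_compact S -> seq_compact T.
Proof.
move=> fc fsurj scS y; have [s fs] := choice (fun n => fsurj (y n)).
have [phi [phi_incr [l sl]]] := scS s.
exists phi; split => //; exists (f l).
have -> : y \o phi = f \o (s \o phi) by apply: funext => n /=; rewrite fs.
exact: cvg_comp sl (fc l).
Qed.

Lemma seq_compact_prod_proj (J : Type) (X : J -> topologicalType) :
  (forall j, inhabited (X j)) ->
  seq_compact (prod_topology X) -> forall j, seq_compact (X j).
Proof.
move=> Xne sc j; apply: seq_compact_continuous_surj sc.
  exact: prod_proj_continuous.
exact: prod_proj_surjective.
Qed.

Lemma homo_ltn_infl (phi : nat -> nat) :
  {homo phi : m n / (m < n)%N} -> forall n, (n <= phi n)%N.
Proof.
by move=> phi_incr; elim=> // n IH; exact: leq_ltn_trans IH (phi_incr _ _ _).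
Qed.

Lemma infinite_range_inj (T : Type) (f : nat -> T) :
  injective f -> infinite_set (range f).
Proof.
move=> finj; apply/infiniteP.
have [g] : $|{injfun [set: nat] >-> range f}|.
  by apply/injfunPex; exists f => [n _|m n _ _ /finj]; first exists n.
exact: inj_card_le.
Qed.

Lemma infinite_preimage (T U : Type) (f : T -> U) (A : set U) :
  infinite_set (range f `&` A) -> infinite_set (f @^-1` A).
Proof.
move=> infA finA; apply: infA; apply: sub_finite_set (finite_image f finA).
by move=> _ [[t _ <-] At]; exists t.
Qed.

Lemma cvg_finite_outside (T : topologicalType) (y : nat -> T) (l : T) U :
  y @ \oo --> l -> nbhs l U -> finite_set (y @^-1` ~` U).
Proof.
move=> yl lU; have [N _ yU] := yl U lU.
apply: sub_finite_set (finite_II N) => k /= nUk.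
by rewrite ltnNge; apply/negP => /yU.
Qed.

Definition closed_separated {T : topologicalType} (a b : T) : Prop :=
  exists A B : set T, [/\ closed A, closed B, A a, B b & A `&` B = set0].

Lemma not_ultraconnected_separated (T : topologicalType) :
  ~ ultraconnected T -> exists a b : T, closed_separated a b.
Proof.
move=> nuc; apply: contrapT => nsep; apply: nuc => A B cA cB [a Aa] [b Bb].
by apply/set0P/negP => /eqP AB0; apply: nsep; exists a, b, A, B.
Qed.

Lemma separated_not_cvg (T : topologicalType) (a b : T) (y : nat -> T) (l : T) :
  closed_separated a b ->
  infinite_set (y @^-1` [set a]) -> infinite_set (y @^-1` [set b]) ->
  ~ y @ \oo --> l.
Proof.
move=> [A [B [cA cB Aa Bb AB0]]] infa infb yl.
have nbhs_compl (C : set T) : closed C -> ~ C l -> nbhs l (~` C).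
  by move=> cC nCl; apply: open_nbhs_nbhs; split; first exact: closed_openC.
have [Al|nAl] := pselect (A l).
- have nBl : ~ B l by move=> Bl; rewrite -[False]/(set0 l) -AB0.
  apply: infb; apply: sub_finite_set
    (cvg_finite_outside yl (nbhs_compl _ cB nBl)) => k /= -> //.
- apply: infa; apply: sub_finite_set
    (cvg_finite_outside yl (nbhs_compl _ cA nAl)) => k /= -> //.
Qed.

Lemma ultraconnected_seq_compact_cvg (T : topologicalType) :
  ultraconnected T -> seq_compact T ->
  forall x : nat -> T, exists l : T, x @ \oo --> l.
Proof.
move=> uc sc x; pose cl k := closure [set x k].
have clx k : cl k (x k) by exact: subset_closure.
have meet_cl n : (\bigcap_(k in `I_n.+1) cl k) !=set0.
  elim: n => [|n [z zcl]].
    by exists (x 0%N) => k /=; rewrite ltnS leqn0 => /eqP ->.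
  have [w [wcl wcln]] := uc _ _ (closed_bigI (fun k _ => @closed_closure _ _))
    (@closed_closure _ [set x n.+1]) (ex_intro _ z zcl) (ex_intro _ _ (clx n.+1)).
  exists w => k /=; rewrite ltnS leq_eqVlt => /orP[/eqP -> //|kn]; exact: wcl.
have [d dcl] := choice meet_cl.
have [phi [phi_incr [z dz]]] := sc d.
have zcl m : cl m z.
  apply: (closed_cvg _ (@closed_closure _ _) _ _ dz); exists m => // n /= mn.
  by apply: dcl; rewrite /= ltnS (leq_trans mn) ?homo_ltn_infl.
exists z => U /= zU; exists 0%N => // m _.
by have [_ [/= -> ]] := zcl m U zU.
Qed.

Lemma not_ultraconnected_nonconv_seq (T : topologicalType) :
  ~ ultraconnected T -> has_nonconv_seq T.
Proof.
move=> /not_ultraconnected_separated[a [b sep]].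
exists (fun n => if odd n then a else b) => -[l yl].
have infinite_odd (c : bool) : infinite_set (range (fun n => c + n.*2)%N).
  by apply: infinite_range_inj => m n /addnI /double_inj.
apply: separated_not_cvg sep _ _ yl.
- apply: sub_infinite_set (infinite_odd true) => _ [n _ <-] /=.
  by rewrite odd_double.
- apply: sub_infinite_set (infinite_odd false) => _ [n _ <-] /=.
  by rewrite odd_double.
Qed.

Lemma seq_compact_has_nonconv_seqE (T : topologicalType) :
  seq_compact T -> has_nonconv_seq T = ~ ultraconnected T.
Proof.
move=> sc; apply/propext; split; last exact: not_ultraconnected_nonconv_seq.
by move=> [x xnc] uc; apply: xnc; exact: ultraconnected_seq_compact_cvg.
Qed.

Lemma seq_compact_prod_card_lt_s (J : Type) (X : J -> topologicalType) :
  (forall j, inhabited (X j)) ->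
  seq_compact (prod_topology X) -> card_lt_s [set j | ~ ultraconnected (X j)].
Proof.
move=> Xne sc F [_ Fsplit] /pcard_surjP[g gsurj].
have sep j : {ab : X j * X j |
    ~ ultraconnected (X j) -> closed_separated ab.1 ab.2}.
  apply: cid; have [uc|nuc] := pselect (ultraconnected (X j)).
    by case: (Xne j) => z; exists (z, z).
  by have [a [b ab]] := not_ultraconnected_separated nuc; exists (a, b).
pose x n : prod_topology X := fun j =>
  if pselect (g j n) then (sval (sep j)).1 else (sval (sep j)).2.
have [phi [phi_incr [l /cvg_prodP xl]]] := sc x.
have phi_inj : injective phi by apply/incn_inj/leq_mono.
have [S FS [infS infnS]] := Fsplit _ (infinite_range_inj phi_inj).
have [j ucj gjS] := gsurj S FS.
apply: separated_not_cvg (svalP (sep j) ucj) _ _ (xl j).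
- apply: sub_infinite_set (infinite_preimage infS) => n /= Sn.
  by rewrite /x gjS; case: pselect.
- rewrite setDE in infnS; apply: sub_infinite_set (infinite_preimage infnS).
  by move=> n /= nSn; rewrite /x gjS; case: pselect.
Qed.

Lemma seq_compact_prod_of_cvg_outside (J : Type) (X : J -> topologicalType)
    (N : set J) :
  seq_compact (prod_topology (fun k : set_type N => X (val k))) ->
  (forall j, ~ N j -> forall y : nat -> X j, exists l : X j, y @ \oo --> l) ->
  seq_compact (prod_topology X).
Proof.
move=> scN cvg_out x.
have [phi [phi_incr [lN /cvg_prodP xlN]]] := scN (fun n k => x n (val k)).
have xl j : {l : X j | (fun n => x (phi n) j) @ \oo --> l}.
  apply: cid; have [Nj|] := pselect (N j); last by move=> /cvg_out; apply.
  by exists (lN (exist _ j (mem_set Nj))); exact: (xlN (exist _ j (mem_set Nj))).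
exists phi; split => //; exists (fun j => sval (xl j)).
by apply/cvg_prodP => j; exact: svalP (xl j).
Qed.

Lemma card_lt_h_seq_compact_prod (J : Type) (X : J -> topologicalType) :
  (forall j, inhabited (X j)) -> (forall j, seq_compact (X j)) ->
  card_lt_h [set j | ~ ultraconnected (X j)] -> seq_compact (prod_topology X).
Proof.
set N := [set j | ~ ultraconnected (X j)] => Xne sc ltN.
apply: (@seq_compact_prod_of_cvg_outside _ _ N).
  have /card_eqPle[leN _] := card_setT N.
  by apply: ltN.
by move=> j /contrapT uc; exact: ultraconnected_seq_compact_cvg.
Qed.

Theorem corollary4p3 (Hhs : h_eq_s) (J : Type) (X : J -> topologicalType)
  (Xne : forall j, inhabited (X j)) :
  [/\ (seq_compact (prod_topology X) <->
         ((forall j, seq_compact (X j)) /\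
          card_lt_s [set j | has_nonconv_seq (X j)])),
      (seq_compact (prod_topology X) <->
         ((forall j, seq_compact (X j)) /\
          card_lt_s [set j | ~ ultraconnected (X j)])) &
      (((forall j, seq_compact (X j)) /\
          card_lt_s [set j | has_nonconv_seq (X j)]) <->
       ((forall j, seq_compact (X j)) /\
          card_lt_s [set j | ~ ultraconnected (X j)]))].
Proof.
have nonconvE : (forall j, seq_compact (X j)) ->
    [set j | has_nonconv_seq (X j)] = [set j | ~ ultraconnected (X j)].
  by move=> sc; apply/funext => j; exact: seq_compact_has_nonconv_seqE.
have nonconv_ultra :
    ((forall j, seq_compact (X j)) /\ card_lt_s [set j | has_nonconv_seq (X j)])
    <-> ((forall j, seq_compact (X j)) /\
         card_lt_s [set j | ~ ultraconnected (X j)]).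
  by split=> -[sc]; rewrite (nonconvE sc).
have seq_compact_ultra : seq_compact (prod_topology X) <->
    ((forall j, seq_compact (X j)) /\
     card_lt_s [set j | ~ ultraconnected (X j)]).
  split=> [sc|[sc /(Hhs _ _).2]]; last exact: card_lt_h_seq_compact_prod.
  by split; [exact: seq_compact_prod_proj | exact: seq_compact_prod_card_lt_s].
by split=> //; exact: iff_trans seq_compact_ultra (iff_sym nonconv_ultra).
Qed.
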